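(* Fix $i,j\in I$ with $\tau(i)=i\neq j$, and for $m,n\in\mathbb{N}$ let $w_{m,n}(x,y)\in\mathbb{K}[x,y]$ be the unique polynomial with $F_i^mF_jF_i^n=\sum_{r,s}b_{rs}F_i^{\circledast r}\circledast F_j\circledast F_i^{\circledast s}$ in $\mathcal{A}$, where $w_{m,n}(x,y)=\sum_{r,s}b_{rs}x^ry^s$. Then $$w_{m,n}(x,y)=\frac{H_{m,n}(b_ix,b_iy;q_i^2,q_i^{a_{ij}})}{(2b_i)^{m+n}},$$ where $b_i=\tfrac12(q_i-q_i^{-1})c_i^{-1/2}q_i^{-1/2}$ (in a quadratic extension of $\mathbb{K}$; the right-hand side depends only on $b_i^2=\frac{(q_i-q_i^{-1})^2}{4c_iq_i}$ and lies in $\mathbb{K}[x,y]$).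
   Context: Let $I$ be a finite set and $(a_{kl})_{k,l\in I}$ a symmetrizable generalized Cartan matrix, with relatively prime positive integers $d_k$ such that $(d_ka_{kl})$ is symmetric. Let $Q=\bigoplus_{k\in I}\mathbb{Z}\alpha_k$ with $(\alpha_k,\alpha_l)=d_ka_{kl}$, $Q^+=\bigoplus_k\mathbb{N}\alpha_k$. Let $\mathbb{K}$ be a field of characteristic zero, $q\in\mathbb{K}^\times$ with $q^{2d_k}\neq1$ for all $k$, $q_k=q^{d_k}$. Let $\tau:I\to I$ be a bijection with $\tau^2=\mathrm{id}$ and $a_{\tau(k)\tau(l)}=a_{kl}$, and $(c_k)\in(\mathbb{K}^\times)^I$ with $c_k=c_{\tau(k)}$ whenever $a_{k\tau(k)}=0$. Let $T(V^-)=\mathbb{K}\langle F_k:k\in I\rangle$ be the free algebra graded by $-Q^+$ ($\deg F_k=-\alpha_k$), with linear maps $\partial_k^L,\partial_k^R$ defined by $\partial_k^{L}(F_l)=\partial_k^R(F_l)=\delta_{kl}$, $\partial^{L}_k(1)=\partial^R_k(1)=0$ and, for $f$ of degree $-\mu$, $g$ of degree $-\nu$: $\partial_k^R(fg)=q^{(\alpha_k,\nu)}\partial_k^R(f)g+f\partial_k^R(g)$, $\partial_k^L(fg)=\partial_k^L(f)g+q^{(\alpha_k,\mu)}f\partial_k^L(g)$. Let $G_\theta\subseteq Q$ be generated by $\alpha_k-\alpha_{\tau(k)}$, and $\mathcal{A}$ the $\mathbb{K}$-algebra generated by $T(V^-)$ and $K_\mu$ ($\mu\in G_\theta$) with $K_0=1$,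 $K_\mu K_\nu=K_{\mu+\nu}$, $K_\mu F_k=q^{-(\mu,\alpha_k)}F_kK_\mu$; $K_{\tau(k)}K_k^{-1}:=K_{\alpha_{\tau(k)}-\alpha_k}$, $H_\theta=\mathrm{span}\{K_\mu\}$. By earlier work there is a unique associative product $\circledast$ on $\mathcal{A}$ with $h\circledast g=hg$, $g\circledast h=gh$ ($h\in H_\theta$, $g\in T(V^-)$) and $F_k\circledast g=F_kg-\frac{c_kq^{(\alpha_k,\alpha_{\tau(k)})}}{q_k-q_k^{-1}}K_{\tau(k)}K_k^{-1}\partial^L_{\tau(k)}(g)$. Bivariate continuous $p$-Hermite polynomials: $H_n(x;p)$ is defined by $H_{-1}=0$, $H_0=1$, $H_{n+1}=2xH_n-(1-p^n)H_{n-1}$; $H_{m,n}(x,y;p,r)$ is defined by $H_{-1,n}=H_{m,-1}=0$, $H_{0,n}(x,y;p,r)=H_n(y;p)$, and $H_{m+1,n}=2xH_{m,n}-(1-p^m)H_{m-1,n}-p^m(1-p^n)rH_{m,n-1}$ for $m,n\ge0$. *)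

From HB Require Import structures.
From mathcomp Require Import all_boot all_order all_algebra.
Set Implicit Arguments. Unset Strict Implicit. Unset Printing Implicit Defensive.
Import Order.TTheory GRing.Theory Num.Theory.
Local Open Scope ring_scope.

Section Defs.
Variables (I : finType) (K : fieldType).
(* Cartan data: a (GCM), d (symmetrizers), q, tau, c. *)
Variables (a : I -> I -> int) (d : I -> nat) (q : K) (tau : I -> I) (c : I -> K).

(* The root lattice Q = (+)_k Z alpha_k, elements as coordinate functions. *)
Definition simple_root (k : I) : {ffun I -> int} := [ffun l => (l == k)%:Z].

Definition bform (mu nu : {ffun I -> int}) : int :=
  \sum_k \sum_l mu k * nu l * ((d k)%:Z * a k l).

(* weight mu of a word (the word F_{l1}...F_{ln} has degree -mu) *)
Definition wt (u : seq I) : {ffun I -> int} := \sum_(k <- u) simple_root k.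

(* T(V^-) = K<F_k : k in I>, embedded in its completion: an element is the
   function  word |-> coefficient  (the word l1...ln stands for F_l1...F_ln). *)
Definition ser := seq I -> K.
Definition ser_word (w : seq I) : ser := fun u => (u == w)%:R.
Definition ser_mul (f g : ser) : ser :=
  fun u => \sum_(p < (size u).+1) f (take p u) * g (drop p u).

(* partial^L_k : the unique linear map with partial^L_k(F_l) = delta_kl,
   partial^L_k(1) = 0 and
   partial^L_k(fg) = partial^L_k(f) g + q^{(alpha_k,mu)} f partial^L_k(g)
   (deg f = -mu); on a word it deletes one occurrence of F_k, weighted by
   q^{(alpha_k, weight of the letters to its left)}. *)
Definition dL (k : I) (f : ser) : ser := fun u =>
  \sum_(p < (size u).+1)
     q ^ (bform (simple_root k) (wt (take p u))) * f (take p u ++ k :: drop p u).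

(* The algebra A generated by T(V^-) and the K_mu: every element is uniquely
   sum_mu K_mu g_mu; we represent it by mu |-> g_mu. *)
Definition Aelt := {ffun I -> int} -> ser.
Definition embT (g : ser) : Aelt := fun nu => if nu == 0 then g else (fun _ => 0).

Definition qk (k : I) : K := q ^+ d k.
Definition kappa (k : I) : K :=
  c k * q ^ (bform (simple_root k) (simple_root (tau k))) / (qk k - (qk k)^-1).
Definition beta (k : I) : {ffun I -> int} := simple_root (tau k) - simple_root k.

(* On g in T(V^-):
     F_k [*] g = F_k g - kappa_k K_{tau k} K_k^{-1} partial^L_{tau k}(g);
   extended to K_mu g via associativity:
     F_k [*] (K_mu g) = (F_k K_mu) [*] g = q^{(mu,alpha_k)} K_mu (F_k [*] g). *)
Definition starF (k : I) (X : Aelt) : Aelt := fun nu u =>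
  q ^ (bform nu (simple_root k)) * ser_mul (ser_word [:: k]) (X nu) u
  - kappa k * q ^ (bform (nu - beta k) (simple_root k))
      * dL (tau k) (X (nu - beta k)) u.

Definition star_mono (i j : I) (r s : nat) : Aelt :=
  iter r (starF i) (starF j (iter s (starF i) (embT (ser_word [::])))).

(* F_i^m F_j F_i^n = sum_{r,s} b_rs F_i^{[*]r} [*] F_j [*] F_i^{[*]s},
   where w = sum_s (sum_r b_rs x^r) y^s, i.e. b_rs = (w`_s)`_r
   (outer variable y, inner variable x). *)
Definition expansion (i j : I) (m n : nat) (w : {poly {poly K}}) : Prop :=
  embT (ser_word (nseq m i ++ j :: nseq n i)) =
  (fun nu u => \sum_(s < size w) \sum_(r < size w`_s)
                  (w`_s)`_r * star_mono i j r s nu u).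

End Defs.

Section Hermite.
Variable R : comNzRingType.

Fixpoint hermite1 (x p : R) (n : nat) : R :=
  match n with
  | 0 => 1
  | S n' => match n' with
            | 0 => 2 * x
            | S n'' => 2 * x * hermite1 x p n' - (1 - p ^+ n') * hermite1 x p n''
            end
  end.

Fixpoint hermite2 (x y p r : R) (m n : nat) {struct m} : R :=
  match m with
  | 0 => hermite1 y p n
  | S m' => 2 * x * hermite2 x y p r m' n
            - (1 - p ^+ m') * (match m' with 0 => 0 | S m'' => hermite2 x y p r m'' n end)
            - p ^+ m' * (1 - p ^+ n) * r
                * (match n with 0 => 0 | S n' => hermite2 x y p r m' n' end)
  end.
End Hermite.

(* The words F_i^A F_j F_i^B span a subspace of T(V^-) on which all the operations
   involved act by explicit operators on coefficient functions f(A,B): left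
   multiplication by F_i shifts A, and since tau(i) = i and tau(j) <> i the twisted
   derivation partial^L_i maps F_i^A F_j F_i^B to
     [A] F_i^(A-1) F_j F_i^B + q_i^(2A) q_i^(a_ij) [B] F_i^A F_j F_i^(B-1),
   where [k] = 1 + q_i^2 + ... + q_i^(2(k-1)), while F_i [*] x = F_i x - kappa_i partial^L_i x.
   Hence the coefficients of F_i^([*]r) [*] F_j [*] F_i^([*]s) vanish for A + B > r + s
   and form the Kronecker delta at (r,s) on A + B = r + s; this triangularity makes
   w_{m,n} unique.  Writing F_i x = F_i [*] x + kappa_i partial^L_i x for
   x = F_i^m F_j F_i^n gives
     w_{m+1,n} = x w_{m,n} + kappa_i [m] w_{m-1,n} + kappa_i q_i^(2m) q_i^(a_ij) [n] w_{m,n-1},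
   and similarly in y for m = 0.  As kappa_i [k] (2 b_i)^2 = q_i^(2k) - 1, the
   polynomials (2 b_i)^(m+n) w_{m,n} satisfy the recursion defining
   H_{m,n}(b_i x, b_i y; q_i^2, q_i^(a_ij)). *)

From HB Require Import structures.
From mathcomp Require Import all_boot all_order all_algebra.
From Stdlib Require Import FunctionalExtensionality.
From mathcomp Require Import ring zify.
Set Implicit Arguments. Unset Strict Implicit. Unset Printing Implicit Defensive.
Import Order.TTheory GRing.Theory Num.Theory.
Local Open Scope ring_scope.

Lemma sum_ord_widen (V : nmodType) n N (F : nat -> V) :
  (n <= N)%N -> (forall k, (n <= k)%N -> F k = 0) ->
  \sum_(k < n) F k = \sum_(k < N) F k.
Proof.
move=> le_nN F0; rewrite -(subnKC le_nN) big_split_ord /= [X in _ + X]big1 ?addr0 //.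
by move=> k _; apply: F0; rewrite leq_addr.
Qed.

Section BilinearForm.
Variables (I : finType) (a : I -> I -> int) (d : I -> nat).

Lemma bform_rootl k nu :
  bform a d (simple_root k) nu = \sum_l nu l * ((d k)%:Z * a k l).
Proof.
rewrite /bform (bigD1 k) //= [X in _ + X]big1 => [|k' nk]; last first.
  by apply: big1 => l _; rewrite ffunE (negbTE nk) !mul0r.
by rewrite addr0; apply: eq_bigr => l _; rewrite ffunE eqxx mul1r.
Qed.

Lemma bform_roots k l : bform a d (simple_root k) (simple_root l) = (d k)%:Z * a k l.
Proof.
rewrite bform_rootl (bigD1 l) //= big1 => [|l' nl]; last by rewrite ffunE (negbTE nl) mul0r.
by rewrite ffunE eqxx mul1r addr0.
Qed.

Lemma bform_root_wt_nil k : bform a d (simple_root k) (wt ([::] : seq I)) = 0.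
Proof. by rewrite bform_rootl big1 // => l _; rewrite /wt big_nil ffunE !mul0r. Qed.

Lemma bform_root_wt_cons k x u :
  bform a d (simple_root k) (wt (x :: u)) =
  (d k)%:Z * a k x + bform a d (simple_root k) (wt u).
Proof.
rewrite /wt big_cons !bform_rootl -bform_roots bform_rootl -big_split /=.
by apply: eq_bigr => l _; rewrite ffunE mulrDl.
Qed.

Lemma bform0l nu : bform a d 0 nu = 0.
Proof. by rewrite /bform big1 // => k _; rewrite big1 // => l _; rewrite ffunE !mul0r. Qed.

End BilinearForm.

Section WordSeries.
Variables (I : finType) (K : fieldType) (a : I -> I -> int) (d : I -> nat) (q : K).
Hypothesis q_neq0 : q != 0.

Lemma ser_mul_letter k (g : ser I K) u :
  ser_mul (ser_word K [:: k]) g u = if u is x :: u' then (x == k)%:R * g u' else 0.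
Proof.
case: u => [|x u']; rewrite /ser_mul big_ord_recl /=.
  by rewrite big_ord0 /ser_word /= mul0r addr0.
rewrite {1}/ser_word /= mul0r add0r big_ord_recl /=.
rewrite {1}/ser_word /= eqseq_cons !add0n take0 drop0 andbT.
case: u' => [|y u''] /=; first by rewrite big_ord0 addr0.
by rewrite big1 ?addr0 // => p _; rewrite /ser_word /= eqseq_cons /= andbF mul0r.
Qed.

Lemma ser_mul_letter0 (k : I) u : ser_mul (ser_word K [:: k]) (fun _ => 0) u = 0.
Proof. by rewrite ser_mul_letter; case: u => // x u; rewrite mulr0. Qed.

Lemma dL_eq0 k (f : ser I K) u : (forall v, f v = 0) -> dL a d q k f u = 0.
Proof. by move=> f0; apply: big1 => p _; rewrite f0 mulr0. Qed.

Lemma dL_nil k f : dL a d q k f [::] = f [:: k].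
Proof. by rewrite /dL big_ord_recl big_ord0 /= bform_root_wt_nil expr0z mul1r addr0. Qed.

Lemma dL_cons k f x u :
  dL a d q k f (x :: u) =
  f (k :: x :: u) + q ^ ((d k)%:Z * a k x) * dL a d q k (fun v => f (x :: v)) u.
Proof.
rewrite /dL big_ord_recl /= bform_root_wt_nil expr0z mul1r; congr (_ + _).
rewrite mulr_sumr; apply: eq_bigr => p _ /=.
by rewrite bform_root_wt_cons expfzDr // mulrA.
Qed.

End WordSeries.

Section IJIWords.
Variables (I : finType) (K : fieldType) (i j : I).
Hypothesis neq_ij : i != j.

Definition iji_word (u : seq I) :=
  (count_mem j u == 1%N) && all (fun x => (x == i) || (x == j)) u.

(* [ser_iN g] is sum_n g(n) F_i^n and [ser_iji f] is sum_{A,B} f(A,B) F_i^A F_j F_i^B. *)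
Definition ser_iN (g : nat -> K) : ser I K :=
  fun u => if all (pred1 i) u then g (size u) else 0.

Definition ser_iji (f : nat -> nat -> K) : ser I K :=
  fun u => if iji_word u then f (index j u) (size u - (index j u).+1)%N else 0.

Lemma iji_word_cons_i u : iji_word (i :: u) = iji_word u.
Proof. by rewrite /iji_word /= eqxx /= (negbTE neq_ij) add0n. Qed.

Lemma iji_word_cons_j u : iji_word (j :: u) = all (pred1 i) u.
Proof.
rewrite /iji_word /= eqxx add1n eqSS orbT /=.
elim: u => //= x u IH.
case: (eqVneq x i) => [->|xi]; first by rewrite (negbTE neq_ij) add0n /= IH.
by case: (eqVneq x j) => [_|xj]; rewrite ?andbF.
Qed.

Lemma iji_word_cons x u : x != i -> x != j -> iji_word (x :: u) = false.
Proof. by move=> xi xj; rewrite /iji_word /= (negbTE xi) (negbTE xj) /= andbF. Qed.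

Lemma iji_wordP u : reflect (exists A B, u = nseq A i ++ j :: nseq B i) (iji_word u).
Proof.
apply: (iffP idP) => [|[A [B ->]]]; last first.
  by elim: A => [|A IH] /=; rewrite ?iji_word_cons_j ?all_pred1_nseq ?iji_word_cons_i.
elim: u => // x u IH.
case: (eqVneq x i) => [->|xi].
  by rewrite iji_word_cons_i => /IH [A [B ->]]; exists A.+1, B.
case: (eqVneq x j) => [->|xj]; last by rewrite iji_word_cons.
by rewrite iji_word_cons_j => /all_pred1P ->; exists 0%N, (size u).
Qed.

Lemma ser_iN_eq0 g u : (forall n, g n = 0) -> ser_iN g u = 0.
Proof. by move=> g0; rewrite /ser_iN g0; case: ifP. Qed.

Lemma ser_iN_cons_i g u : ser_iN g (i :: u) = ser_iN (fun n => g n.+1) u.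
Proof. by rewrite /ser_iN /= eqxx. Qed.

Lemma ser_iN_cons g x u : x != i -> ser_iN g (x :: u) = 0.
Proof. by move=> xi; rewrite /ser_iN /= (negbTE xi). Qed.

Lemma ser_iN_nseq g n : ser_iN g (nseq n i) = g n.
Proof. by rewrite /ser_iN all_pred1_nseq size_nseq. Qed.

Lemma ser_iji_eq0 f u : (forall A B, f A B = 0) -> ser_iji f u = 0.
Proof. by move=> f0; rewrite /ser_iji f0; case: ifP. Qed.

Lemma ser_iji_nonword f u : ~~ iji_word u -> ser_iji f u = 0.
Proof. by move=> nu; rewrite /ser_iji (negbTE nu). Qed.

Lemma ser_iji_cons_i f u : ser_iji f (i :: u) = ser_iji (fun A B => f A.+1 B) u.
Proof. by rewrite /ser_iji iji_word_cons_i /= (negbTE neq_ij); case: ifP. Qed.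

Lemma ser_iji_cons_j f u : ser_iji f (j :: u) = ser_iN (f 0%N) u.
Proof. by rewrite /ser_iji iji_word_cons_j /= eqxx subSS subn0. Qed.

Lemma ser_iji_cons f x u : x != i -> x != j -> ser_iji f (x :: u) = 0.
Proof. by move=> xi xj; rewrite /ser_iji iji_word_cons. Qed.

Lemma ser_iji_word f A B : ser_iji f (nseq A i ++ j :: nseq B i) = f A B.
Proof.
elim: A f => [|A IH] f /=; first by rewrite ser_iji_cons_j ser_iN_nseq.
by rewrite ser_iji_cons_i IH.
Qed.

Definition delta2 (m n A B : nat) : K := ((A == m) && (B == n))%:R.

Lemma ser_word_iji m n u :
  ser_word K (nseq m i ++ j :: nseq n i) u = ser_iji (delta2 m n) u.
Proof.
have [/iji_wordP [A [B ->]]|nu] := boolP (iji_word u); last first.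
  rewrite ser_iji_nonword // /ser_word; case: eqP => // eu.
  by move: nu; rewrite eu => /negP[]; apply/iji_wordP; exists m, n.
rewrite ser_iji_word /ser_word /delta2; congr (_%:R); congr nat_of_bool.
apply/eqP/andP => [e|[/eqP -> /eqP ->]] //.
have eA : A = m.
  move: (congr1 (index j) e).
  rewrite !index_cat !mem_nseq [j == i]eq_sym (negbTE neq_ij) !andbF /= eqxx.
  by rewrite !addn0 !size_nseq.
move: (congr1 size e); rewrite eA !size_cat /= !size_nseq => /eqP.
by rewrite eqn_add2l eqSS => /eqP ->.
Qed.

Lemma ser_word_nil u : ser_word K [::] u = ser_iN (fun n => (n == 0%N)%:R) u.
Proof. by case: u => [|x u] //; rewrite /ser_word /ser_iN /=; case: ifP. Qed.

End IJIWords.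

Section CoefficientOperators.
Variables (I : finType) (K : fieldType) (a : I -> I -> int) (d : I -> nat).
Variables (q : K) (i j : I).
Hypotheses (q_neq0 : q != 0) (neq_ij : i != j).

Definition q_ii := q ^ ((d i)%:Z * a i i).
Definition q_ij := q ^ ((d i)%:Z * a i j).
Definition qint n := \sum_(t < n) q_ii ^+ t.

Definition shift_iN (g : nat -> K) n := if n is n'.+1 then g n' else 0.
Definition shift_iji (f : nat -> nat -> K) A B := if A is A'.+1 then f A' B else 0.
Definition lmul_j (g : nat -> K) A (B : nat) := if A is 0%N then g B else 0.
Definition dLi_iN (g : nat -> K) n := qint n.+1 * g n.+1.
Definition dLi_iji (f : nat -> nat -> K) A B :=
  qint A.+1 * f A.+1 B + q_ii ^+ A * q_ij * qint B.+1 * f A B.+1.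

Lemma qintS n : qint n.+1 = 1 + q_ii * qint n.
Proof.
rewrite /qint big_ord_recl expr0 mulr_sumr; congr (_ + _).
by apply: eq_bigr => t _; rewrite exprS.
Qed.

Lemma ser_mul_i_iN g u :
  ser_mul (ser_word K [:: i]) (ser_iN i g) u = ser_iN i (shift_iN g) u.
Proof.
rewrite ser_mul_letter; case: u => [|x u] //.
case: (eqVneq x i) => [->|xi]; first by rewrite ser_iN_cons_i mul1r.
by rewrite ser_iN_cons // mul0r.
Qed.

Lemma ser_mul_i_iji f u :
  ser_mul (ser_word K [:: i]) (ser_iji i j f) u = ser_iji i j (shift_iji f) u.
Proof.
rewrite ser_mul_letter; case: u => [|x u] //.
case: (eqVneq x i) => [->|xi]; first by rewrite ser_iji_cons_i // mul1r.
rewrite mul0r; case: (eqVneq x j) => [->|xj]; last by rewrite ser_iji_cons.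
by rewrite ser_iji_cons_j // ser_iN_eq0.
Qed.

Lemma ser_mul_j_iN g u :
  ser_mul (ser_word K [:: j]) (ser_iN i g) u = ser_iji i j (lmul_j g) u.
Proof.
rewrite ser_mul_letter; case: u => [|x u] //.
case: (eqVneq x j) => [->|xj]; first by rewrite ser_iji_cons_j // mul1r.
rewrite mul0r; case: (eqVneq x i) => [->|xi]; last by rewrite ser_iji_cons.
by rewrite ser_iji_cons_i // ser_iji_eq0.
Qed.

Lemma dL_iN_neq k g u : k != i -> dL a d q k (ser_iN i g) u = 0.
Proof.
move=> ki; apply: big1 => p _.
by rewrite /ser_iN all_cat /= (negbTE ki) andbF mulr0.
Qed.

Lemma dL_i_iN g u : dL a d q i (ser_iN i g) u = ser_iN i (dLi_iN g) u.
Proof.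
elim: u g => [|x u IH] g.
  by rewrite dL_nil /dLi_iN /qint /ser_iN /= eqxx big_ord1 expr0 mul1r.
rewrite dL_cons //; case: (eqVneq x i) => [->|xi]; last first.
  rewrite ser_iN_cons_i !ser_iN_cons // add0r dL_eq0 ?mulr0 // => v.
  exact: ser_iN_cons.
have -> : (fun v => ser_iN i g (i :: v)) = ser_iN i (fun n => g n.+1).
  by apply: functional_extensionality => v; rewrite ser_iN_cons_i.
rewrite -/q_ii !ser_iN_cons_i IH /ser_iN /=.
case: ifP => _; last by rewrite mulr0 addr0.
by rewrite /dLi_iN [qint (size u).+2]qintS; ring.
Qed.

Lemma dL_i_iji f u : dL a d q i (ser_iji i j f) u = ser_iji i j (dLi_iji f) u.
Proof.
elim: u f => [|x u IH] f; first by rewrite dL_nil ser_iji_cons_i.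
rewrite dL_cons //; case: (eqVneq x i) => [->|xi].
  have -> : (fun v => ser_iji i j f (i :: v)) = ser_iji i j (fun A B => f A.+1 B).
    by apply: functional_extensionality => v; rewrite ser_iji_cons_i.
  rewrite -/q_ii !ser_iji_cons_i // IH /ser_iji.
  case: ifP => _; last by rewrite mulr0 addr0.
  rewrite /dLi_iji; set A := index _ _; set B := (_ - _)%N.
  by rewrite [qint A.+2]qintS exprS; ring.
case: (eqVneq x j) => [->|xj]; last first.
  rewrite ser_iji_cons_i // !ser_iji_cons // add0r dL_eq0 ?mulr0 // => v.
  exact: ser_iji_cons.
have -> : (fun v => ser_iji i j f (j :: v)) = ser_iN i (f 0%N).
  by apply: functional_extensionality => v; rewrite ser_iji_cons_j.
rewrite -/q_ij ser_iji_cons_i // !ser_iji_cons_j // dL_i_iN /ser_iN.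
case: ifP => _; last by rewrite mulr0 addr0.
by rewrite /dLi_iji /dLi_iN [qint 1]/qint big_ord1 !expr0; ring.
Qed.

End CoefficientOperators.

Section StarProducts.
Variables (I : finType) (K : fieldType) (a : I -> I -> int) (d : I -> nat).
Variables (q : K) (tau : I -> I) (c : I -> K) (i j : I).
Hypotheses (q_neq0 : q != 0) (neq_ij : i != j) (tau_i : tau i = i) (tau_j : tau j != i).

Local Notation kappa_i := (kappa a d q tau c i).

Definition starFi_iN g n := shift_iN g n - kappa_i * dLi_iN a d q i g n.
Definition starFi_iji f A B := shift_iji f A B - kappa_i * dLi_iji a d q i j f A B.

Definition star1_coef s := iter s starFi_iN (fun n => (n == 0%N)%:R).
Definition star_coef r s := iter r starFi_iji (lmul_j (star1_coef s)).

Lemma starF_i_embT s :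
  starF a d q tau c i (embT s) =
  embT (fun u => ser_mul (ser_word K [:: i]) s u - kappa_i * dL a d q i s u).
Proof.
apply: functional_extensionality => nu; apply: functional_extensionality => u.
rewrite /starF /embT /beta tau_i subrr subr0.
case: eqP => [->|_]; first by rewrite bform0l expr0z !mul1r mulr1.
by rewrite ser_mul_letter0 dL_eq0 // !mulr0 subr0.
Qed.

Lemma starF_j_iN g :
  starF a d q tau c j (embT (ser_iN i g)) = embT (ser_iji i j (lmul_j g)).
Proof.
apply: functional_extensionality => nu; apply: functional_extensionality => u.
rewrite /starF.
have -> : dL a d q (tau j) (embT (ser_iN i g) (nu - beta tau j)) u = 0.
  by rewrite /embT; case: ifP => _; [apply: dL_iN_neq | apply: dL_eq0].
rewrite mulr0 subr0 /embT.
case: eqP => [->|_]; first by rewrite bform0l expr0z mul1r ser_mul_j_iN.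
by rewrite ser_mul_letter0 mulr0.
Qed.

Lemma iter_starF_i_iN s g :
  iter s (starF a d q tau c i) (embT (ser_iN i g)) =
  embT (ser_iN i (iter s starFi_iN g)).
Proof.
elim: s => //= s ->; rewrite starF_i_embT; congr embT.
apply: functional_extensionality => u.
rewrite ser_mul_i_iN dL_i_iN // /ser_iN; case: ifP => _ //.
by rewrite mulr0 subr0.
Qed.

Lemma iter_starF_i_iji r f :
  iter r (starF a d q tau c i) (embT (ser_iji i j f)) =
  embT (ser_iji i j (iter r starFi_iji f)).
Proof.
elim: r => //= r ->; rewrite starF_i_embT; congr embT.
apply: functional_extensionality => u.
rewrite ser_mul_i_iji // dL_i_iji // /ser_iji; case: ifP => _ //.
by rewrite mulr0 subr0.
Qed.

Lemma star_monoE r s :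
  star_mono a d q tau c i j r s = embT (ser_iji i j (star_coef r s)).
Proof.
rewrite /star_mono.
have -> : embT (ser_word K [::]) = embT (ser_iN i (fun n => (n == 0%N)%:R)).
  by congr embT; apply: functional_extensionality => u; rewrite (ser_word_nil _ i).
by rewrite iter_starF_i_iN starF_j_iN iter_starF_i_iji.
Qed.

Definition expand_coef (w : {poly {poly K}}) A B :=
  \sum_(s < size w) \sum_(r < size w`_s) (w`_s)`_r * star_coef r s A B.

Lemma expansion_coefP m n w :
  expansion a d q tau c i j m n w <->
  forall A B, expand_coef w A B = delta2 K m n A B.
Proof.
have star_mono_at nu u r s : star_mono a d q tau c i j r s nu u =
    if nu == 0 then ser_iji i j (star_coef r s) u else 0.
  by rewrite star_monoE /embT; case: eqP.
split=> [ew A B|ew].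
  move: (congr1 (fun F => F 0 (nseq A i ++ j :: nseq B i)) ew).
  rewrite /= /embT eqxx ser_word_iji // ser_iji_word // => ->.
  by apply: eq_bigr => s _; apply: eq_bigr => r _; rewrite star_mono_at eqxx ser_iji_word.
apply: functional_extensionality => nu; apply: functional_extensionality => u.
rewrite /embT; case: eqP => [->|/eqP nz]; last first.
  by rewrite big1 // => s _; rewrite big1 // => r _; rewrite star_mono_at (negbTE nz) /= mulr0.
rewrite ser_word_iji //.
case: (boolP (iji_word i j u)) => [/(iji_wordP neq_ij) [A [B ->]]|not_iji].
  rewrite ser_iji_word // -ew; apply: eq_bigr => s _; apply: eq_bigr => r _.
  by rewrite star_mono_at eqxx ser_iji_word.
rewrite ser_iji_nonword // big1 // => s _; rewrite big1 // => r _.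
by rewrite star_mono_at eqxx ser_iji_nonword // mulr0.
Qed.

Local Notation qint_i := (qint a d q i).
Local Notation q_ii := (q_ii a d q i).
Local Notation q_ij := (q_ij a d q i j).

Lemma starFi_iN_sum (T : finType) (G : T -> nat -> K) n :
  starFi_iN (fun x => \sum_(k : T) G k x) n = \sum_(k : T) starFi_iN (G k) n.
Proof.
rewrite /starFi_iN /dLi_iN sumrB !mulr_sumr; congr (_ - _).
by case: n => [|n] //=; rewrite big1.
Qed.

Lemma starFi_iN_scale (x : K) g n : starFi_iN (fun k => x * g k) n = x * starFi_iN g n.
Proof. by rewrite /starFi_iN /shift_iN /dLi_iN; case: n => [|n]; ring. Qed.

Lemma starFi_iji_sum (T : finType) (G : T -> nat -> nat -> K) A B :
  starFi_iji (fun x y => \sum_(k : T) G k x y) A B = \sum_(k : T) starFi_iji (G k) A B.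
Proof.
rewrite /starFi_iji /dLi_iji sumrB; congr (_ - _).
  by case: A => [|A] //=; rewrite big1.
by rewrite !mulr_sumr -big_split mulr_sumr; apply: eq_bigr => k _; rewrite mulrDr.
Qed.

Lemma starFi_iji_scale (x : K) f A B :
  starFi_iji (fun y z => x * f y z) A B = x * starFi_iji f A B.
Proof. by rewrite /starFi_iji /shift_iji /dLi_iji; case: A => [|A]; ring. Qed.

Definition expand1_coef (P : {poly K}) n :=
  \sum_(s < size P) P`_s * star1_coef s n.

Lemma expand1_coef_bound (P : {poly K}) N n : (size P <= N)%N ->
  expand1_coef P n = \sum_(s < N) P`_s * star1_coef s n.
Proof.
move=> le_PN; apply: (sum_ord_widen (F := fun s => P`_s * star1_coef s n)) => // k le_Pk.
by rewrite nth_default ?mul0r.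
Qed.

Lemma expand1_coef0 n : expand1_coef 0 n = 0.
Proof. by rewrite /expand1_coef size_poly0 big_ord0. Qed.

Lemma expand1_coefD (P1 P2 : {poly K}) n :
  expand1_coef (P1 + P2) n = expand1_coef P1 n + expand1_coef P2 n.
Proof.
set N := maxn (size P1) (size P2).
rewrite (@expand1_coef_bound P1 N) ?leq_maxl // (@expand1_coef_bound P2 N) ?leq_maxr //.
rewrite (@expand1_coef_bound _ N) ?size_polyD // -big_split; apply: eq_bigr => s _.
by rewrite coefD mulrDl.
Qed.

Lemma expand1_coefZ x (P : {poly K}) n : expand1_coef (x%:P * P) n = x * expand1_coef P n.
Proof.
rewrite (@expand1_coef_bound _ (size P)) ?mul_polyC ?size_scale_leq // mulr_sumr.
by apply: eq_bigr => s _; rewrite coefZ mulrA.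
Qed.

Lemma expand1_coefX (P : {poly K}) n :
  expand1_coef ('X * P) n = starFi_iN (expand1_coef P) n.
Proof.
rewrite (@expand1_coef_bound _ (size P).+1); last first.
  by rewrite (leq_trans (size_polyMleq _ _)) // size_polyX.
rewrite /expand1_coef starFi_iN_sum big_ord_recl coefXM /= mul0r add0r.
by apply: eq_bigr => s _; rewrite starFi_iN_scale coefXM.
Qed.

Definition max_coef_size (w : {poly {poly K}}) := (\max_(s < size w) size (w`_s)%R)%N.

Lemma size_coef_le_max (w : {poly {poly K}}) s : (size (w`_s)%R <= max_coef_size w)%N.
Proof.
case: (ltnP s (size w)) => [lt_sw|le_ws]; last by rewrite nth_default // size_poly0.
exact: (@leq_bigmax _ (fun s : 'I_(size w) => size (w`_s)%R) (Ordinal lt_sw)).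
Qed.

Lemma expand_coef_bound (w : {poly {poly K}}) Ns Nr A B :
  (size w <= Ns)%N -> (forall s, size (w`_s)%R <= Nr)%N ->
  expand_coef w A B = \sum_(s < Ns) \sum_(r < Nr) (w`_s)`_r * star_coef r s A B.
Proof.
move=> le_ws le_wr; rewrite /expand_coef.
rewrite (eq_bigr (fun s : 'I_(size w) => \sum_(r < Nr) (w`_s)`_r * star_coef r s A B)).
  apply: (sum_ord_widen (F := fun s => \sum_(r < Nr) (w`_s)`_r * star_coef r s A B)) => //.
  by move=> s le_s; apply: big1 => r _; rewrite (nth_default _ le_s) coef0 mul0r.
move=> s _; apply: (sum_ord_widen (F := fun r => (w`_s)`_r * star_coef r s A B)) => //.
by move=> r le_r; rewrite nth_default ?mul0r.
Qed.

Lemma expand_coef0 A B : expand_coef 0 A B = 0.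
Proof. by rewrite /expand_coef size_poly0 big_ord0. Qed.

Lemma expand_coefD w1 w2 A B :
  expand_coef (w1 + w2) A B = expand_coef w1 A B + expand_coef w2 A B.
Proof.
set Ns := maxn (size w1) (size w2); set Nr := maxn (max_coef_size w1) (max_coef_size w2).
have le1 s : (size (w1`_s)%R <= Nr)%N by rewrite (leq_trans (size_coef_le_max _ _)) ?leq_maxl.
have le2 s : (size (w2`_s)%R <= Nr)%N by rewrite (leq_trans (size_coef_le_max _ _)) ?leq_maxr.
rewrite (@expand_coef_bound w1 Ns Nr) ?leq_maxl // (@expand_coef_bound w2 Ns Nr) ?leq_maxr //.
rewrite (@expand_coef_bound _ Ns Nr) ?size_polyD // => [|s]; last first.
  by rewrite coefD (leq_trans (size_polyD _ _)) // geq_max le1 le2.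
rewrite -big_split; apply: eq_bigr => s _; rewrite -big_split; apply: eq_bigr => r _.
by rewrite !coefD mulrDl.
Qed.

Lemma expand_coefZ x w A B : expand_coef (x%:P%:P * w) A B = x * expand_coef w A B.
Proof.
rewrite (expand_coef_bound _ _ (leqnn _) (size_coef_le_max w)).
rewrite (@expand_coef_bound _ (size w) (max_coef_size w)) => [||s]; last first.
- by rewrite coefCM mul_polyC (leq_trans (size_scale_leq _ _)) ?size_coef_le_max.
- by rewrite mul_polyC size_scale_leq.
rewrite mulr_sumr; apply: eq_bigr => s _; rewrite mulr_sumr; apply: eq_bigr => r _.
by rewrite coefCM mul_polyC coefZ mulrA.
Qed.

Lemma expand_coefN w A B : expand_coef (- w) A B = - expand_coef w A B.
Proof.
have -> : - w = (-1)%:P%:P * w by rewrite !polyCN !polyC1 mulN1r.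
by rewrite expand_coefZ mulN1r.
Qed.

Lemma expand_coefX w A B : expand_coef ('X%:P * w) A B = starFi_iji (expand_coef w) A B.
Proof.
have -> : expand_coef w = fun A B =>
    \sum_(s < size w) \sum_(r < max_coef_size w) (w`_s)`_r * star_coef r s A B.
  apply: functional_extensionality => A'; apply: functional_extensionality => B'.
  exact: expand_coef_bound (leqnn _) (size_coef_le_max w).
rewrite (@expand_coef_bound _ (size w) (max_coef_size w).+1) => [||s]; last first.
- rewrite coefCM (leq_trans (size_polyMleq _ _)) // size_polyX /=.
  by rewrite ltnS size_coef_le_max.
- by rewrite mul_polyC size_scale_leq.
rewrite starFi_iji_sum; apply: eq_bigr => s _.
rewrite starFi_iji_sum big_ord_recl (coefCM 'X w s) coefXM /= mul0r add0r.
by apply: eq_bigr => r _; rewrite starFi_iji_scale coefXM.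
Qed.

Lemma expand_coef_polyC (P : {poly K}) A B :
  expand_coef (P^:P) A B = lmul_j (expand1_coef P) A B.
Proof.
rewrite (@expand_coef_bound _ (size P) 1) => [||s]; last first.
- by rewrite coef_map /= size_polyC_leq1.
- by rewrite size_map_polyC.
rewrite /lmul_j /expand1_coef; case: A => [|A].
  by apply: eq_bigr => s _; rewrite big_ord1 coef_map /= coefC eqxx.
by apply: big1 => s _; rewrite big_ord1 /star_coef /= /lmul_j mulr0.
Qed.

Fixpoint w_poly1 n : {poly K} :=
  match n with
  | 0 => 1
  | n'.+1 => 'X * w_poly1 n' +
      (kappa_i * qint_i n')%:P * (if n' is n''.+1 then w_poly1 n'' else 0)
  end.

Fixpoint w_poly m n : {poly {poly K}} :=
  match m with
  | 0 => (w_poly1 n)^:P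
  | m'.+1 => 'X%:P * w_poly m' n
      + (kappa_i * qint_i m')%:P%:P * (if m' is m''.+1 then w_poly m'' n else 0)
      + (kappa_i * q_ii ^+ m' * q_ij * qint_i n)%:P%:P *
          (if n is n'.+1 then w_poly m' n' else 0)
  end.

Lemma w_poly1S n : w_poly1 n.+1 =
  'X * w_poly1 n + (kappa_i * qint_i n)%:P * (if n is n'.+1 then w_poly1 n' else 0).
Proof. by []. Qed.

Lemma w_polyS m n : w_poly m.+1 n =
  'X%:P * w_poly m n
  + (kappa_i * qint_i m)%:P%:P * (if m is m'.+1 then w_poly m' n else 0)
  + (kappa_i * q_ii ^+ m * q_ij * qint_i n)%:P%:P * (if n is n'.+1 then w_poly m n' else 0).
Proof. by []. Qed.

Lemma expand1_coef_w_poly1 n k : expand1_coef (w_poly1 n) k = (k == n)%:R.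
Proof.
elim/ltn_ind: n k => -[|n] IH k.
  by rewrite /expand1_coef /= size_poly1 big_ord1 coefC eqxx mul1r.
rewrite w_poly1S expand1_coefD expand1_coefZ expand1_coefX.
have -> : expand1_coef (w_poly1 n) = fun k => (k == n)%:R.
  by apply: functional_extensionality => k'; rewrite IH.
rewrite /starFi_iN /shift_iN /dLi_iN.
case: n IH => [|n] IH; first by rewrite expand1_coef0 !mulr0 subr0 addr0; case: k.
rewrite IH // eqSS; case: k => [|k] /=.
  by case: (eqVneq n 0%N) => [->|nz] /=; [ring | rewrite !mulr0 subr0 addr0].
by case: (eqVneq k.+1 n) => [<-|ne]; rewrite ?eqxx /=; [ring | rewrite !mulr0 subr0 addr0].
Qed.

Lemma dLi_iji_delta2 m n A B :
  dLi_iji a d q i j (delta2 K m n) A B =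
  qint_i m * (if m is m'.+1 then delta2 K m' n A B else 0)
  + q_ii ^+ m * q_ij * qint_i n * (if n is n'.+1 then delta2 K m n' A B else 0).
Proof.
rewrite /dLi_iji /delta2; congr (_ + _).
  case: m => [|m] /=; first by rewrite !mulr0.
  by rewrite eqSS; case: (A =P m) => [->|_] //=; rewrite !mulr0.
case: n => [|n] /=; first by rewrite andbF !mulr0.
rewrite eqSS; case: (A =P m) => [->|_] /=; last by rewrite !mulr0.
by case: (B =P n) => [->|_] //=; rewrite !mulr0.
Qed.

Lemma expand_coef_w_poly m n A B : expand_coef (w_poly m n) A B = delta2 K m n A B.
Proof.
elim/ltn_ind: m n A B => -[|m] IH n A B.
  by rewrite /= expand_coef_polyC /lmul_j expand1_coef_w_poly1 /delta2; case: A.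
rewrite w_polyS !expand_coefD !expand_coefZ expand_coefX.
have -> : expand_coef (w_poly m n) = delta2 K m n.
  apply: functional_extensionality => A'; apply: functional_extensionality => B'.
  exact: IH.
have -> : expand_coef (if m is m'.+1 then w_poly m' n else 0) A B =
          (if m is m'.+1 then delta2 K m' n A B else 0).
  by case: m IH => [|m] IH; rewrite ?expand_coef0 ?IH.
have -> : expand_coef (if n is n'.+1 then w_poly m n' else 0) A B =
          (if n is n'.+1 then delta2 K m n' A B else 0).
  by case: n => [|n]; rewrite ?expand_coef0 ?IH.
have -> : delta2 K m.+1 n A B =
    starFi_iji (delta2 K m n) A B + kappa_i * dLi_iji a d q i j (delta2 K m n) A B.
  by rewrite /starFi_iji subrK /shift_iji /delta2; case: A.
by rewrite dLi_iji_delta2 mulrDr !mulrA addrA.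
Qed.

Lemma star1_coef_diag s n : (s <= n)%N -> star1_coef s n = (n == s)%:R.
Proof.
rewrite /star1_coef; elim: s n => [|s IH] [|n] //= le_sn.
rewrite /starFi_iN /shift_iN /dLi_iN IH // (IH n.+2); last by lia.
have -> : (n.+2 == s) = false by apply/negbTE; lia.
by rewrite !mulr0 subr0.
Qed.

Lemma star_coef_triangular r s A B :
  (r + s <= A + B)%N -> star_coef r s A B = delta2 K r s A B.
Proof.
rewrite /star_coef; elim: r A B => [|r IH] A B le_rsAB /=.
  rewrite /lmul_j /delta2; case: A le_rsAB => [|A] le_sAB //=.
  by rewrite add0n in le_sAB; rewrite star1_coef_diag.
rewrite /starFi_iji /shift_iji /dLi_iji !IH; try lia.
have -> : delta2 K r s A.+1 B = 0.
  by rewrite /delta2; case: (A.+1 =P r) => [eA|] //=; case: (B =P s) => [eB|] //=; lia.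
have -> : delta2 K r s A B.+1 = 0.
  by rewrite /delta2; case: (A =P r) => [eA|] //=; case: (B.+1 =P s) => [eB|] //=; lia.
rewrite !mulr0 addr0 mulr0 subr0.
by case: A le_rsAB => [|A] le_rsAB //; rewrite IH ?eqSS //; lia.
Qed.

Lemma sum_ord_delta N (F : nat -> K) x : (x < N)%N ->
  \sum_(k < N) F k * (x == k)%:R = F x.
Proof.
move=> lt_xN; rewrite (bigD1 (Ordinal lt_xN)) //= eqxx mulr1 big1 ?addr0 // => k nk.
suff /negbTE-> : x != k by rewrite mulr0.
by apply: contra nk => /eqP exk; apply/eqP/val_inj.
Qed.

Lemma expand_coef_lead (v : {poly {poly K}}) r s :
  (forall r' s', (r + s < r' + s')%N -> (v`_s')`_r' = 0) ->
  expand_coef v r s = (v`_s)`_r.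
Proof.
move=> v0; set N := maxn (maxn (size v) (max_coef_size v)) (r + s).+1.
have le_vN : (maxn (size v) (max_coef_size v) <= N)%N by rewrite leq_maxl.
rewrite (@expand_coef_bound v N N) => [||s']; last first.
- exact: leq_trans (size_coef_le_max v s') (leq_trans (leq_maxr _ _) le_vN).
- exact: leq_trans (leq_maxl _ _) le_vN.
have term s' r' : (v`_s')`_r' * star_coef r' s' r s =
                  (v`_s')`_r' * (s == s')%:R * (r == r')%:R.
  case: (leqP (r' + s') (r + s)) => [le_rs|lt_rs]; last by rewrite v0 // !mul0r.
  by rewrite star_coef_triangular // /delta2 -mulrA -natrM mulnb andbC.
have [lt_rN lt_sN] : (r < N)%N /\ (s < N)%N by split; lia.
under eq_bigr => s' _ do under eq_bigr => r' _ do rewrite term.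
under eq_bigr => s' _ do rewrite (sum_ord_delta (fun r' => (v`_s')`_r' * _)) //.
by rewrite (sum_ord_delta (fun s' => (v`_s')`_r)).
Qed.

Lemma expand_coef_eq0 (v : {poly {poly K}}) : (forall A B, expand_coef v A B = 0) -> v = 0.
Proof.
move=> v0; set N := maxn (size v) (max_coef_size v).
have coef_eq0 k r s : (N + N <= r + s + k)%N -> (v`_s)`_r = 0.
  elim: k r s => [|k IH] r s le_rsk.
    have [le_Nr|lt_rN] := leqP N r.
      apply: nth_default; apply: leq_trans (size_coef_le_max v s) _.
      exact: leq_trans (leq_maxr _ _) le_Nr.
    have lt_Ns : (N < s)%N by clearbody N; lia.
    by rewrite (@nth_default _ 0 v s) ?coef0 // (leq_trans (leq_maxl _ _) (ltnW lt_Ns)).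
  rewrite -expand_coef_lead ?v0 // => r' s' lt_rs; apply: IH; lia.
apply/polyP => s; apply/polyP => r; rewrite !coef0; apply: (coef_eq0 (N + N)); lia.
Qed.

Lemma expansionE m n w : expansion a d q tau c i j m n w <-> w = w_poly m n.
Proof.
split=> [/expansion_coefP ew|->]; last exact/expansion_coefP/expand_coef_w_poly.
apply/eqP; rewrite -subr_eq0; apply/eqP/expand_coef_eq0 => A B.
by rewrite expand_coefD expand_coefN ew expand_coef_w_poly subrr.
Qed.

End StarProducts.

Lemma rescale_var (R : comNzRingType) (x X g w h : R) k :
  x * g = 2 * X -> w * g ^+ k = h -> x * w * g ^+ k.+1 = 2 * X * h.
Proof. by move=> <- <-; rewrite exprS; ring. Qed.

Lemma rescale_const (R : comNzRingType) (c P g w h : R) k :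
  c * g ^+ 2 = - P -> w * g ^+ k = h * g -> c * w * g ^+ k.+1 = - P * h.
Proof.
move=> <- hw; transitivity (c * (w * g ^+ k) * g); first by rewrite exprSr; ring.
by rewrite hw; ring.
Qed.

Lemma hermite2S (R : comNzRingType) (x y p r : R) m n :
  hermite2 x y p r m.+1 n =
  2 * x * hermite2 x y p r m n
  - (1 - p ^+ m) * (if m is m'.+1 then hermite2 x y p r m' n else 0)
  - p ^+ m * (1 - p ^+ n) * r * (if n is n'.+1 then hermite2 x y p r m n' else 0).
Proof. by []. Qed.

Section Hermite.
Variables (I : finType) (K : fieldType) (a : I -> I -> int) (d : I -> nat).
Variables (q : K) (tau : I -> I) (c : I -> K) (i j : I).
Variables (L : fieldType) (phi : {rmorphism K -> L}) (b : L).

Local Notation kappa_i := (kappa a d q tau c i).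
Local Notation qint_i := (qint a d q i).
Local Notation Phi := (map_poly (map_poly phi)).
Local Notation G := (2 * b)%:P%:P.
Local Notation P := (phi (q_ii a d q i))%:P%:P.
Local Notation R := (phi (q_ij a d q i j))%:P%:P.

Hypothesis kappa_qint_scale :
  forall k, phi (kappa_i * qint_i k) * (2 * b) ^+ 2 = - (1 - phi (q_ii a d q i) ^+ k).

Lemma polyC2_qint_scale k : (phi (kappa_i * qint_i k))%:P%:P * G ^+ 2 = - (1 - P ^+ k).
Proof.
have /(congr1 (fun x => x%:P%:P)) /= := kappa_qint_scale k.
by rewrite !(polyCM, polyCN, polyCB, polyC1, rmorphXn).
Qed.

Lemma polyC2_qint_scale2 m n :
  (phi (kappa_i * q_ii a d q i ^+ m * q_ij a d q i j * qint_i n))%:P%:P * G ^+ 2 =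
  - (P ^+ m * (1 - P ^+ n) * R).
Proof.
have -> : kappa_i * q_ii a d q i ^+ m * q_ij a d q i j * qint_i n =
          q_ii a d q i ^+ m * q_ij a d q i j * (kappa_i * qint_i n) by ring.
move: (polyC2_qint_scale n); move: (2 * b) (kappa_i * qint_i n) => g t ht.
by rewrite !rmorphM !rmorphXn /= -mulrA ht; ring.
Qed.

Lemma map_poly2_polyC_step (u : K) (p p' : {poly K}) :
  Phi (('X * p + u%:P * p')^:P) = 'X * Phi (p^:P) + (phi u)%:P%:P * Phi (p'^:P).
Proof.
rewrite (rmorphD (map_poly polyC)) !(rmorphM (map_poly polyC)) /= map_polyX map_polyC.
by rewrite (rmorphD Phi) !(rmorphM Phi) /= map_polyX !map_polyC /= map_polyC.
Qed.

Lemma map_poly2_step (u v : K) (w w1 w2 : {poly {poly K}}) :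
  Phi ('X%:P * w + u%:P%:P * w1 + v%:P%:P * w2) =
  'X%:P * Phi w + (phi u)%:P%:P * Phi w1 + (phi v)%:P%:P * Phi w2.
Proof.
rewrite !(rmorphD Phi) !(rmorphM Phi) /= !map_polyC /= !map_polyC /=.
by rewrite map_polyX.
Qed.

Lemma w_poly1_hermite n : Phi ((w_poly1 a d q tau c i n)^:P) * G ^+ n =
  hermite1 (b%:P%:P * 'X) P n.
Proof.
have y_scale : 'X * G = 2 * (b%:P%:P * 'X) by rewrite !polyCM !polyC_natr; ring.
elim/ltn_ind: n => -[|n] IH.
  by rewrite expr0 mulr1 [w_poly1 _ _ _ _ _ _ 0]/= !rmorph1.
rewrite w_poly1S map_poly2_polyC_step mulrDl (rescale_var y_scale (IH _ _)) //.
case: n IH => [|n] IH; first by rewrite !rmorph0 mulr0 mul0r addr0 mulr1.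
have IHn : Phi ((w_poly1 a d q tau c i n)^:P) * G ^+ n.+1 =
    hermite1 (b%:P%:P * 'X) P n * G.
  by rewrite exprSr mulrA IH.
by rewrite (rescale_const (polyC2_qint_scale _) IHn) mulNr.
Qed.

Lemma w_poly_hermite m n : Phi (w_poly a d q tau c i j m n) * G ^+ (m + n) =
  hermite2 (b *: 'X)%:P (b%:P%:P * 'X) P R m n.
Proof.
have x_scale : 'X%:P * G = 2 * (b *: 'X)%:P.
  by rewrite -mul_polyC !polyCM !polyC_natr; ring.
elim/ltn_ind: m n => -[|m] IH n; first by rewrite add0n w_poly1_hermite.
rewrite w_polyS map_poly2_step addSn 2!mulrDl (rescale_var x_scale (IH _ _ _)) //.
set H := hermite2 (b *: 'X)%:P (b%:P%:P * 'X) P R.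
have IHm : Phi (if m is m'.+1 then w_poly a d q tau c i j m' n else 0) * G ^+ (m + n) =
    (if m is m'.+1 then H m' n else 0) * G.
  by case: m IH => [|m] IH; rewrite ?rmorph0 ?mul0r // addSn exprSr mulrA IH.
have IHn : Phi (if n is n'.+1 then w_poly a d q tau c i j m n' else 0) * G ^+ (m + n) =
    (if n is n'.+1 then H m n' else 0) * G.
  by clear IHm; case: n => [|n]; rewrite ?rmorph0 ?mul0r // addnS exprSr mulrA IH.
rewrite (rescale_const (polyC2_qint_scale _) IHm).
by rewrite (rescale_const (polyC2_qint_scale2 _ _) IHn) /H hermite2S !mulNr.
Qed.

End Hermite.

Section KappaIdentity.
Variables (I : finType) (K : fieldType) (a : I -> I -> int) (d : I -> nat).
Variables (q : K) (tau : I -> I) (c : I -> K) (i : I).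
Hypotheses (a_ii : a i i = 2) (tau_i : tau i = i) (c_i_neq0 : c i != 0).
Hypotheses (q_neq0 : q != 0) (q2_neq1 : q ^+ (2 * d i) != 1) (four_neq0 : (4 : K) != 0).

Local Notation qi := (q ^+ d i).

Lemma q_iiE : q_ii a d q i = qi ^+ 2.
Proof. by rewrite /q_ii a_ii -exprz_exp. Qed.

Lemma q_ijE j : q_ij a d q i j = qi ^ a i j.
Proof. by rewrite /q_ij -exprz_exp. Qed.

Lemma qi2_neq1 : qi * qi - 1 != 0.
Proof. by rewrite subr_eq0 -expr2 -exprM mulnC. Qed.

Lemma kappa_qint k :
  kappa a d q tau c i * qint a d q i k =
  (q_ii a d q i ^+ k - 1) * (c i * qi / (qi - qi^-1) ^+ 2).
Proof.
have qi_neq0 : qi != 0 by rewrite expf_neq0.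
rewrite q_iiE subrX1 /qint q_iiE /kappa /qk tau_i bform_roots a_ii.
have -> : q ^ ((d i)%:Z * 2) = qi ^+ 2 by rewrite -exprz_exp.
by field; rewrite qi_neq0 qi2_neq1.
Qed.

Variables (L : fieldType) (phi : {rmorphism K -> L}) (b : L).
Hypothesis b_sqr : b ^+ 2 = phi ((qi - qi^-1) ^+ 2 / (4 * c i * qi)).

Lemma scale_sqr_kappa_factor : phi (c i * qi / (qi - qi^-1) ^+ 2) * (2 * b) ^+ 2 = 1.
Proof.
rewrite exprMn b_sqr -(rmorph_nat phi 2) -rmorphXn -!rmorphM -(rmorph1 phi).
by congr (phi _); field; rewrite expf_neq0 // c_i_neq0 four_neq0 qi2_neq1.
Qed.

Lemma scale_sqr_kappa_qint k :
  phi (kappa a d q tau c i * qint a d q i k) * (2 * b) ^+ 2 = - (1 - phi (q_ii a d q i) ^+ k).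
Proof.
rewrite kappa_qint rmorphM -mulrA scale_sqr_kappa_factor mulr1.
by rewrite rmorphB rmorph1 rmorphXn opprB.
Qed.

Lemma scale_neq0 : 2 * b != 0.
Proof.
apply: contra_eq_neq scale_sqr_kappa_factor => ->.
by rewrite expr0n mulr0 eq_sym oner_neq0.
Qed.

End KappaIdentity.

Theorem proposition4p8 (I : finType) (a : I -> I -> int) (d : I -> nat)
  (K : fieldType) (q : K) (tau : I -> I) (c : I -> K) (i j : I) (m n : nat) :
  (* generalized Cartan matrix *)
  (forall k, a k k = 2) ->
  (forall k l, k != l -> a k l <= 0) ->
  (forall k l, a k l = 0 <-> a l k = 0) ->
  (* symmetrizable, with relatively prime positive d_k *)
  (forall k, (0 < d k)%N) ->
  (forall e : nat, (forall k, (e %| d k)%N) -> e = 1%N) ->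
  (forall k l, (d k)%:Z * a k l = (d l)%:Z * a l k) ->
  (* K of characteristic zero, q in K^x with q^{2 d_k} <> 1 *)
  [pchar K] =i pred0 ->
  q != 0 ->
  (forall k, q ^+ (2 * d k)%N != 1) ->
  (* tau an involutive diagram automorphism, c_k *)
  (forall k, tau (tau k) = k) ->
  (forall k l, a (tau k) (tau l) = a k l) ->
  (forall k, c k != 0) ->
  (forall k, a k (tau k) = 0 -> c k = c (tau k)) ->
  tau i = i -> i != j ->
  (exists w, expansion a d q tau c i j m n w) /\
  forall w, expansion a d q tau c i j m n w ->
    forall (L : fieldType) (phi : {rmorphism K -> L}) (b : L),
      b ^+ 2 = phi ((q ^+ d i - (q ^+ d i)^-1) ^+ 2 / (4 * c i * q ^+ d i)) ->
      map_poly (map_poly phi) w =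
        hermite2 (b *: 'X)%:P (b%:P%:P * 'X)
                 (phi ((q ^+ d i) ^+ 2))%:P%:P (phi ((q ^+ d i) ^ a i j))%:P%:P m n
        * ((2 * b) ^- (m + n))%:P%:P.
Proof.
move=> a_ii _ _ _ _ _ charK q_neq0 q2_neq1 tau_inv _ c_neq0 _ tau_i neq_ij.
have tau_j : tau j != i.
  by apply: contraNneq neq_ij => tau_ji; rewrite -[j]tau_inv tau_ji tau_i.
have expE := expansionE a d c q_neq0 neq_ij tau_i tau_j m n.
split=> [|w /expE -> L phi b b_sqr]; first by exists (w_poly a d q tau c i j m n); apply/expE.
have four_neq0 : (4 : K) != 0 by move/pcharf0P: charK => ->.
have scale :=
  scale_sqr_kappa_qint (a_ii i) tau_i (c_neq0 i) q_neq0 (q2_neq1 i) four_neq0 b_sqr.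
have := w_poly_hermite j scale m n; rewrite (q_iiE d q (a_ii i)) q_ijE => <-.
have := scale_neq0 (c_neq0 i) q_neq0 (q2_neq1 i) four_neq0 b_sqr => b2_neq0.
by rewrite -mulrA -!rmorphXn /= -!rmorphM /= mulfV ?expf_neq0 // !rmorph1 mulr1.
Qed.
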